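(* Let $g$ be an $n$-person WTT game form satisfying the standing assumptions below, let $i\in[n]$ and $j\in X_i$. Then either the hyperplane $H_j$ has a proper outcome, or $H_j$ is a sink hyperplane.
   Context: Let $X_1,\dots,X_n$ and $A$ be finite nonempty sets. An $n$-person game form is a map $g: X_1\times\cdots\times X_n\to A$; elements of $X=X_1\times\cdots\times X_n$ are strategy profiles. For a direction $i\in[n]$ write $X_{-i}=\prod_{t\neq i}X_t$, and for $s\in X_i$, $y\in X_{-i}$ write $(s,y)$ for the profile with $i$-th coordinate $s$ and other coordinates $y$. The hyperplane perpendicular to direction $i$ at $s\in X_i$ is $H_s=\{x\in X: x_i=s\}$. $g$ is weakly totally tight (WTT) if for every $i\in[n]$, all $s\neq s'$ in $X_i$ and all $y\neq y'$ in $X_{-i}$, at least one of $g(s,y)=g(s,y')$, $g(s,y)=g(s',y)$, $g(s',y')=g(s',y)$, $g(s',y')=g(s,y')$ holds. A set $S\subseteq X$ is a constant region if there is $c\in A$ with $g(x)=c$ for all $x\in S$. For distinct $j,k\in X_i$, $H_j^{\neq}(k)=\{(j,y): y\in X_{-i},\ g(j,y)\neq g(k,y)\}$. We write $H_j\stackrel{c}{\longrightarrow}H_k$ if $g(x)=c$ for all $x\in H_j^{\neq}(k)$, and $H_j\stackrel{c}{\Longrightarrow}H_k$ if $H_j\stackrel{c}{\longrightarrow}H_k$ and there is no outcome $d$ with $H_k\stackrel{d}{\longrightarrow}H_j$. If there exist $k\in X_i\setminus\{j\}$ and $c\in A$ with $H_j\stackrel{c}{\Longrightarrow}H_k$, then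 $c$ is called the proper outcome of $H_j$ (for WTT $g$ it does not depend on the choice of $k$). $H_j$ is a sink hyperplane if for every $k\in X_i\setminus\{j\}$ there exists an outcome $c_k$ with $H_k\stackrel{c_k}{\longrightarrow}H_j$. Standing assumptions: no hyperplane of $g$ is a constant region, and for every $i$ and distinct $j,k\in X_i$ there is $y\in X_{-i}$ with $g(j,y)\neq g(k,y)$. *)

From mathcomp Require Import all_boot.
Unset Printing Implicit Defensive.

Definition profile (n : nat) (X : 'I_n -> finType) := {dffun forall t : 'I_n, X t}.
Arguments profile {n} X.

(* (s, y): the profile with i-th coordinate s and other coordinates those of y.
   An element of X_{-i} is represented by a full profile y whose i-th
   coordinate is ignored. *)
Definition upd (n : nat) (X : 'I_n -> finType) (y : profile X) (i : 'I_n) (s : X i)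
  : profile X :=
  [ffun t : 'I_n => match i =P t with
                    | ReflectT e => ecast t (X t) e s
                    | ReflectF _ => y t end].
Arguments upd {n X} y i s.

Definition diff_off (n : nat) (X : 'I_n -> finType) (i : 'I_n) (y y' : profile X) : Prop :=
  exists t : 'I_n, t != i /\ y t != y' t.
Arguments diff_off {n X} i y y'.

Definition WTT (n : nat) (X : 'I_n -> finType) (A : finType) (g : profile X -> A) : Prop :=
  forall (i : 'I_n) (s s' : X i) (y y' : profile X),
    s != s' -> @diff_off n X i y y' ->
    g (upd y i s) = g (upd y' i s) \/ g (upd y i s) = g (upd y i s') \/
    g (upd y' i s') = g (upd y i s') \/ g (upd y' i s') = g (upd y' i s).
Arguments WTT {n X A} g.

Definition constant_region (n : nat) (X : 'I_n -> finType) (A : finType)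
  (g : profile X -> A) (S : profile X -> Prop) : Prop :=
  exists c : A, forall x, S x -> g x = c.
Arguments constant_region {n X A} g S.

Definition hyperplane (n : nat) (X : 'I_n -> finType) (i : 'I_n) (s : X i)
  (x : profile X) : Prop := x i = s.
Arguments hyperplane {n X} i s x.

Definition arrow (n : nat) (X : 'I_n -> finType) (A : finType) (g : profile X -> A)
  (i : 'I_n) (j k : X i) (c : A) : Prop :=
  forall y : profile X, g (upd y i j) != g (upd y i k) -> g (upd y i j) = c.
Arguments arrow {n X A} g i j k c.

Definition Darrow (n : nat) (X : 'I_n -> finType) (A : finType) (g : profile X -> A)
  (i : 'I_n) (j k : X i) (c : A) : Prop :=
  @arrow n X A g i j k c /\ ~ (exists d : A, @arrow n X A g i k j d).
Arguments Darrow {n X A} g i j k c.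

Definition has_proper_outcome (n : nat) (X : 'I_n -> finType) (A : finType)
  (g : profile X -> A) (i : 'I_n) (j : X i) : Prop :=
  exists (k : X i) (c : A), k != j /\ @Darrow n X A g i j k c.
Arguments has_proper_outcome {n X A} g i j.

Definition sink_hyperplane (n : nat) (X : 'I_n -> finType) (A : finType)
  (g : profile X -> A) (i : 'I_n) (j : X i) : Prop :=
  forall k : X i, k != j -> exists c : A, @arrow n X A g i k j c.
Arguments sink_hyperplane {n X A} g i j.

From mathcomp Require Import all_boot.
From Stdlib Require Import Classical.

Set Implicit Arguments.
Unset Strict Implicit.

(* For distinct j, k, WTT forces any two columns on which H_j and H_k disagree
   to share their value on H_j or on H_k.  Hence H_j and H_k cannot both fail
   to point to each other: a column leaving the j-value of a reference column
   and another leaving its k-value would have to share a side with each other,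
   and either choice contradicts one of them.  So if H_j is not a sink, some
   H_k does not point to H_j, and then H_j ==c==> H_k for some c. *)

Lemma upd_eq_off (n : nat) (X : 'I_n -> finType) (i : 'I_n) (y y' : profile X)
    (s : X i) :
  ~ diff_off i y y' -> upd y i s = upd y' i s.
Proof.
move=> same_off; apply/ffunP => t; rewrite !ffunE.
case: (i =P t) => [//|ne_it].
apply/eqP/negPn/negP => ne_yt; apply: same_off; exists t; split=> //.
by apply/eqP => eq_ti; apply: ne_it; rewrite eq_ti.
Qed.

Section Arrows.

Variables (n : nat) (X : 'I_n -> finType) (A : finType) (g : profile X -> A).
Variable i : 'I_n.

Definition disagree (j k : X i) (y : profile X) : bool :=
  g (upd y i j) != g (upd y i k).

Lemma disagreeC (j k : X i) (y : profile X) : disagree j k y = disagree k j y.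
Proof. by rewrite /disagree eq_sym. Qed.

Lemma not_arrow (j k : X i) (c : A) :
  ~ arrow g i j k c -> exists y, disagree j k y && (g (upd y i j) != c).
Proof.
move=> no_arrow; apply: NNPP => no_col; apply: no_arrow => y dis_y.
apply/eqP/negPn/negP => ne_c; apply: no_col; exists y; exact/andP.
Qed.

Hypothesis hWTT : WTT g.

Lemma disagree_share_side (j k : X i) (y y' : profile X) :
  j != k -> disagree j k y -> disagree j k y' ->
  g (upd y i j) = g (upd y' i j) \/ g (upd y i k) = g (upd y' i k).
Proof.
move=> ne_jk dis_y dis_y'.
have [off|same_off] := classic (diff_off i y y'); last first.
  by left; rewrite (upd_eq_off j same_off).
case: (hWTT ne_jk off) => [|[e|[e|e]]]; [by left | | by right |].
- by rewrite /disagree e eqxx in dis_y.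
- by rewrite /disagree e eqxx in dis_y'.
Qed.

Lemma arrow_either (j k : X i) (y0 : profile X) :
  j != k -> disagree j k y0 ->
  (exists c, arrow g i j k c) \/ (exists d, arrow g i k j d).
Proof.
move=> ne_jk dis_y0.
have [|no_jk] := classic (exists c, arrow g i j k c); first by left.
have [|no_kj] := classic (exists d, arrow g i k j d); first by right.
have [y1 /andP[dis_y1 ne_j1]] :=
  not_arrow (c := g (upd y0 i j)) (fun a => no_jk (ex_intro _ _ a)).
have [y3 /andP[dis_y3 ne_k3]] :=
  not_arrow (c := g (upd y0 i k)) (fun a => no_kj (ex_intro _ _ a)).
rewrite -disagreeC in dis_y3.
have eq_k01 : g (upd y0 i k) = g (upd y1 i k).
  case: (disagree_share_side ne_jk dis_y0 dis_y1) => // e.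
  by rewrite e eqxx in ne_j1.
have eq_j30 : g (upd y3 i j) = g (upd y0 i j).
  case: (disagree_share_side ne_jk dis_y3 dis_y0) => // e.
  by rewrite e eqxx in ne_k3.
case: (disagree_share_side ne_jk dis_y3 dis_y1) => e.
  by rewrite -e eq_j30 eqxx in ne_j1.
by rewrite e -eq_k01 eqxx in ne_k3.
Qed.

End Arrows.

Theorem mainTheorem5 (n : nat) (X : 'I_n -> finType) (A : finType)
  (g : profile X -> A)
  (hXne : forall t : 'I_n, 0 < #|X t|) (hAne : 0 < #|A|)
  (hWTT : WTT g)
  (hnoconst : forall (i : 'I_n) (s : X i), ~ constant_region g (hyperplane i s))
  (hdist : forall (i : 'I_n) (j k : X i), j != k ->
             exists y : profile X, g (upd y i j) != g (upd y i k))
  (i : 'I_n) (j : X i) :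
  has_proper_outcome g i j \/ sink_hyperplane g i j.
Proof.
have [|not_sink] := classic (sink_hyperplane g i j); first by right.
left.
have [k not_sink_k] := not_all_ex_not _ _ not_sink.
have [ne_kj no_kj] := imply_to_and _ _ not_sink_k.
have ne_jk : j != k by rewrite eq_sym.
have [y0 dis_y0] := hdist i j k ne_jk.
case: (arrow_either hWTT ne_jk dis_y0) => [[c arr_jk]|//].
by exists k, c.
Qed.
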